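(* Let $R$ be a discrete valuation ring and let $G$ be a group acting on $R$ by ring automorphisms. Then the invariant ring $R^G=\{r\in R:\ g(r)=r\text{ for all } g\in G\}$ is either a field or a discrete valuation ring; in particular, $R^G$ is noetherian. *)

(* Ring-theoretic notions relative to a subset S of an
   integral domain R (S is the carrier of a subring, with R's operations). *)
From mathcomp Require Import all_boot all_algebra.
Set Implicit Arguments. Unset Strict Implicit. Unset Printing Implicit Defensive.
Import GRing.Theory.
Local Open Scope ring_scope.

Section SubringNotions.
Variable R : idomainType.
Implicit Types (S I J M : R -> Prop).

Definition subring_in S : Prop :=
  [/\ S 0, S 1, (forall x y, S x -> S y -> S (x - y)) &
      (forall x y, S x -> S y -> S (x * y))].

Definition unit_in S (x : R) : Prop := S x /\ exists y, S y /\ x * y = 1.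

(* the ring S is a field: every nonzero element is a unit (1 <> 0 holds in R) *)
Definition field_in S : Prop :=
  subring_in S /\ forall x, S x -> x != 0 -> unit_in S x.

Definition ideal_in S I : Prop :=
  [/\ (forall x, I x -> S x), I 0,
      (forall x y, I x -> I y -> I (x + y)) &
      (forall r x, S r -> I x -> I (r * x))].

Definition principal_in S I : Prop :=
  exists a, S a /\ forall x, I x <-> exists r, S r /\ x = r * a.

(* S is a principal ideal domain (S is a domain since R is) *)
Definition pid_in S : Prop := forall I, ideal_in S I -> principal_in S I.

Definition maximal_in S M : Prop :=
  [/\ ideal_in S M, ~ M 1 &
      forall J, ideal_in S J -> (forall x, M x -> J x) ->
        (forall x, J x <-> M x) \/ J 1].

Definition local_in S : Prop :=
  exists M, maximal_in S M /\
    forall M', maximal_in S M' -> forall x, M' x <-> M x.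

Definition dvr_in S : Prop :=
  [/\ subring_in S, pid_in S, local_in S & ~ field_in S].

Definition noetherian_in S : Prop :=
  forall I : nat -> R -> Prop,
    (forall n, ideal_in S (I n)) ->
    (forall n x, I n x -> I n.+1 x) ->
    exists N, forall n, (N <= n)%N -> forall x, I n x -> I N x.

Definition whole : R -> Prop := fun _ => True.

Definition ring_aut (f : R -> R) : Prop :=
  [/\ (forall x y, f (x + y) = f x + f y),
      (forall x y, f (x * y) = f x * f y),
      f 1 = 1 & bijective f].

Definition invariants (G : Type) (act : G -> R -> R) : R -> Prop :=
  fun r => forall g, act g r = r.
End SubringNotions.

Definition is_group (G : Type) (mul : G -> G -> G) (one : G) (inv : G -> G) : Prop :=
  [/\ (forall a b c, mul a (mul b c) = mul (mul a b) c),
      (forall a, mul one a = a), (forall a, mul a one = a),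
      (forall a, mul (inv a) a = one) & (forall a, mul a (inv a) = one)].

Definition ring_aut_action (R : idomainType) (G : Type) (mul : G -> G -> G)
    (one : G) (act : G -> R -> R) : Prop :=
  [/\ forall g, ring_aut (act g),
      (forall r, act one r = r) &
      (forall g h r, act (mul g h) r = act g (act h r))].

From mathcomp Require Import all_boot all_algebra.
From mathcomp Require Import ring.
From Stdlib Require Import ClassicalEpsilon Classical.
Set Implicit Arguments. Unset Strict Implicit. Unset Printing Implicit Defensive.
Import GRing.Theory.
Local Open Scope ring_scope.

(* A discrete valuation ring R is a valuation ring: of two elements one divides
   the other, and the non-units form its maximal ideal M. An ideal J of R^G
   therefore generates the ideal of R of all multiples of elements of J, which
   is principal, say generated by a in J; if x = t a with x, a invariant and
   a != 0, then t is invariant since R is a domain, so J = a R^G. Likewise an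
   invariant unit has an invariant inverse, so the proper ideals of R^G consist
   of non-units and R^G is local with maximal ideal the intersection of R^G
   with M. Hence R^G is a local principal ideal domain: a field or a discrete
   valuation ring. *)

Lemma pid_noetherian (R : idomainType) (S : R -> Prop) :
  subring_in S -> pid_in S -> noetherian_in S.
Proof.
move=> [_ S1 _ _] pidS I Iid Iincr.
have Imono n m : (n <= m)%N -> forall x, I n x -> I m x.
  move=> /subnKC <-; elim: (m - n)%N => [|k IHk] x Inx; first by rewrite addn0.
  by rewrite addnS; apply/Iincr/IHk.
pose U x := exists n, I n x.
have Uid : ideal_in S U.
  split.
  - by move=> x [n Inx]; case: (Iid n) => + _ _ _; apply.
  - by exists 0%N; case: (Iid 0%N).
  - move=> x y [n Inx] [m Imy]; exists (maxn n m).
    case: (Iid (maxn n m)) => _ _ + _; apply.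
    + exact: Imono (leq_maxl n m) _ Inx.
    + exact: Imono (leq_maxr n m) _ Imy.
  - by move=> r x Sr [n Inx]; exists n; case: (Iid n) => _ _ _; apply.
have [a [_ Ua]] := pidS U Uid.
have [N INa] : U a by apply/Ua; exists 1; split=> //; rewrite mul1r.
exists N => n _ x Inx.
have [r [Sr ->]] : exists r, S r /\ x = r * a by apply/Ua; exists n.
by case: (Iid N) => _ _ _; apply.
Qed.

Section WholeRing.
Variable R : idomainType.
Implicit Types (x y : R) (I M : R -> Prop).

Definition multiples x : R -> Prop := fun w => exists r, w = r * x.

Lemma ideal_multiples x : ideal_in (@whole R) (multiples x).
Proof.
split=> //.
- by exists 0; rewrite mul0r.
- by move=> _ _ [r ->] [s ->]; exists (r + s); rewrite mulrDl.
- by move=> t _ _ [r ->]; exists (t * r); rewrite mulrA.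
Qed.

(* ACC stands in for Zorn's lemma: otherwise choice yields an infinite
   strictly ascending chain of proper ideals lying in no maximal ideal. *)
Lemma proper_ideal_sub_maximal I :
  noetherian_in (@whole R) -> ideal_in (@whole R) I -> ~ I 1 ->
  exists M, maximal_in (@whole R) M /\ forall x, I x -> M x.
Proof.
move=> noeth Iid I1; apply: NNPP => noMax.
pose P J := [/\ ideal_in (@whole R) J, ~ J 1 &
  ~ exists M, maximal_in (@whole R) M /\ forall x, J x -> M x].
pose Q J J' := [/\ P J', forall x, J x -> J' x & exists x, J' x /\ ~ J x].
have grow J : P J -> exists J', Q J J'.
  case=> Jid J1 Jmax; apply: NNPP => noQ; apply: (Jmax); exists J.
  split=> //; split=> // J' J'id JJ'; apply: NNPP => /not_or_and[J'J J'1].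
  have [x [J'x Jx]] : exists x, J' x /\ ~ J x.
    apply: NNPP => nx; apply: J'J => x; split=> [J'x|]; last exact: JJ'.
    by apply: NNPP => Jx; apply: nx; exists x.
  apply: noQ; exists J'; split=> //; last by exists x.
  by split=> // -[M [Mmax J'M]]; apply: Jmax; exists M; split=> // y /JJ'/J'M.
pose chain n := iter n (fun J => epsilon (inhabits I) (Q J)) I.
have Pchain n : P (chain n).
  elim: n => [|n IHn]; first by split.
  by have [] := epsilon_spec (inhabits I) (Q (chain n)) (grow _ IHn).
have Qchain n : Q (chain n) (chain n.+1).
  exact: epsilon_spec (inhabits I) (Q (chain n)) (grow _ (Pchain n)).
have [N HN] : exists N, forall n, (N <= n)%N -> forall x, chain n x -> chain N x.
  apply: noeth => [n|n]; first by case: (Pchain n).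
  by case: (Qchain n).
have [_ _ [x [xSN xN]]] := Qchain N.
exact/xN/(HN N.+1).
Qed.

Lemma nonunit_sub_unique_maximal M x :
  noetherian_in (@whole R) ->
  (forall M', maximal_in (@whole R) M' -> forall y, M' y <-> M y) ->
  x \isn't a GRing.unit -> M x.
Proof.
move=> noeth Muniq xN.
have x1 : ~ multiples x 1.
  by case=> r r1; move/negP: xN; apply; apply/unitrPr; exists r; rewrite mulrC.
have [M' [M'max xM']] := proper_ideal_sub_maximal noeth (ideal_multiples x) x1.
by apply/(Muniq _ M'max)/xM'; exists 1; rewrite mul1r.
Qed.

Lemma divisibility_total M :
  pid_in (@whole R) -> maximal_in (@whole R) M ->
  (forall x, x \isn't a GRing.unit -> M x) ->
  forall x y, multiples x y \/ multiples y x.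
Proof.
move=> pidR Mmax nonunitM x y.
pose K w := exists r s, w = r * x + s * y.
have Kid : ideal_in (@whole R) K.
  split=> //.
  - by exists 0, 0; rewrite !mul0r addr0.
  - move=> _ _ [r [s ->]] [r' [s' ->]]; exists (r + r'), (s + s').
    by rewrite !mulrDl addrACA.
  - by move=> t _ _ [r [s ->]]; exists (t * r), (t * s); rewrite mulrDr !mulrA.
have [d [_ Kd]] := pidR K Kid.
have [c [_ xcd]] : exists c, whole c /\ x = c * d.
  by apply/Kd; exists 1, 0; rewrite mul1r mul0r addr0.
have [e [_ yed]] : exists e, whole e /\ y = e * d.
  by apply/Kd; exists 0, 1; rewrite mul1r mul0r add0r.
have [r [s drs]] : K d by apply/Kd; exists 1; split=> //; rewrite mul1r.
have [d0|dn0] := eqVneq d 0.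
  by right; exists 0; rewrite xcd d0 mulr0 mul0r.
have rcse : r * c + s * e = 1.
  by apply: (mulIf dn0); rewrite mul1r {2}drs xcd yed; ring.
have [cU|cN] := boolP (c \is a GRing.unit).
  by left; exists (e * c^-1); rewrite yed xcd mulrA -(mulrA e) mulVr ?mulr1.
have [eU|eN] := boolP (e \is a GRing.unit).
  by right; exists (c * e^-1); rewrite xcd yed mulrA -(mulrA c) mulVr ?mulr1.
case: Mmax => [[_ _ Madd _] M1 _]; exfalso; apply: M1; rewrite -rcse; apply: Madd.
- by apply: nonunitM; rewrite unitrM negb_and cN orbT.
- by apply: nonunitM; rewrite unitrM negb_and eN orbT.
Qed.

Definition extension I : R -> Prop := fun w => exists2 a, I a & multiples a w.

Lemma ideal_extension I :
  (forall x y, multiples x y \/ multiples y x) -> I 0 ->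
  ideal_in (@whole R) (extension I).
Proof.
move=> total I0; split=> //.
- by exists 0 => //; exists 0; rewrite mul0r.
- move=> _ _ [a Ia [r ->]] [b Ib [s ->]].
  case: (total a b) => [[c ->]|[c ->]].
  + by exists a => //; exists (r + s * c); rewrite mulrDl mulrA.
  + by exists b => //; exists (r * c + s); rewrite mulrDl mulrA.
- by move=> t _ _ [a Ia [r ->]]; exists a => //; exists (t * r); rewrite mulrA.
Qed.

End WholeRing.

Lemma ring_autB (R : idomainType) (f : R -> R) (x y : R) :
  ring_aut f -> f (x - y) = f x - f y.
Proof. by case=> fD _ _ _; apply: (addIr (f y)); rewrite -fD !subrK. Qed.

Section Invariants.
Variables (R : idomainType) (G : Type) (act : G -> R -> R).
Hypothesis act_aut : forall g, ring_aut (act g).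
Local Notation A := (invariants act).

Lemma invariants_subring : subring_in A.
Proof.
split=> [g|g|x y Ax Ay g|x y Ax Ay g].
- by rewrite -(subrr 1) ring_autB //; case: (act_aut g) => _ _ -> _.
- by case: (act_aut g).
- by rewrite ring_autB // Ax Ay.
- by case: (act_aut g) => _ -> _ _; rewrite Ax Ay.
Qed.

Lemma invariants_divl a c : A a -> a != 0 -> A (c * a) -> A c.
Proof.
move=> Aa a0 Aca g; apply: (mulIf a0).
by case: (act_aut g) => _ fM _ _; rewrite -{1}(Aa g) -fM Aca.
Qed.

Lemma invariants_inv a : A a -> a \is a GRing.unit -> A a^-1.
Proof.
move=> Aa aU; apply: invariants_divl Aa _ _.
  by apply: contraTneq aU => ->; rewrite unitr0.
by rewrite mulVr //; case: invariants_subring.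
Qed.

Lemma invariants_pid :
  pid_in (@whole R) -> (forall x y : R, multiples x y \/ multiples y x) -> pid_in A.
Proof.
move=> pidR total J [JA J0 _ Jmul].
have [d [_ Ed]] := pidR _ (ideal_extension total J0).
have [a Ja [r dra]] : extension J d by apply/Ed; exists 1; split=> //; rewrite mul1r.
exists a; split=> [|x]; first exact: JA.
split=> [Jx|[c [Ac ->]]]; last exact: Jmul.
have [t [_ xtd]] : exists t, whole t /\ x = t * d.
  by apply/Ed; exists x => //; exists 1; rewrite mul1r.
have [a0|an0] := eqVneq a 0.
  by exists 0; split; [case: invariants_subring | rewrite xtd dra a0 !mulr0].
exists (t * r); split; last by rewrite xtd dra mulrA.
by apply: invariants_divl (JA _ Ja) an0 _; rewrite -mulrA -dra -xtd; apply: JA.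
Qed.

Section LocalInvariants.
Variable M : R -> Prop.
Hypothesis Mmax : maximal_in (@whole R) M.
Hypothesis nonunitM : forall x, x \isn't a GRing.unit -> M x.

Lemma proper_invariant_ideal_sub J :
  ideal_in A J -> ~ J 1 -> forall x, J x -> M x.
Proof.
move=> [JA _ _ Jmul] J1 x Jx; apply: nonunitM; apply/negP => xU.
by apply: J1; rewrite -(mulVr xU); apply: Jmul (invariants_inv (JA _ Jx) xU) Jx.
Qed.

Lemma maximal_invariants_meet : maximal_in A (fun x => A x /\ M x).
Proof.
have [[_ M0 Madd Mmul] M1 _] := Mmax.
have [A0 _ _ AM] := invariants_subring.
have AD x y : A x -> A y -> A (x + y).
  by move=> Ax Ay g; case: (act_aut g) => -> _ _ _; rewrite Ax Ay.
split=> [|[//]|J Jid MJ].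
  split=> [x [] //|//|x y [Ax Mx] [Ay My]|r x Ar [Ax Mx]].
  - by split; [apply: AD | apply: Madd].
  - by split; [apply: AM | apply: Mmul].
have [J1|J1] := classic (J 1); [by right | left=> x].
split=> [Jx|]; last exact: MJ.
by split; [case: Jid => + _ _ _; apply | apply: proper_invariant_ideal_sub Jx].
Qed.

Lemma local_invariants : local_in A.
Proof.
exists (fun x => A x /\ M x); split=> [|M' [M'id M'1 M'max] x].
  exact: maximal_invariants_meet.
have M'sub y : M' y -> A y /\ M y.
  by move=> M'y; split; [case: M'id => + _ _ _; apply |
                         apply: proper_invariant_ideal_sub M'y].
have [MAid _ _] := maximal_invariants_meet.
case: (M'max _ MAid M'sub) => [eqM|[_]]; first exact: iff_sym (eqM x).
by case: Mmax => _ M1 _ /M1.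
Qed.

End LocalInvariants.
End Invariants.

Theorem mainTheorem5 (R : idomainType) (G : Type) (mul : G -> G -> G)
    (one : G) (inv : G -> G) (act : G -> R -> R) :
  dvr_in (@whole R) ->
  is_group mul one inv ->
  ring_aut_action mul one act ->
  (field_in (invariants act) \/ dvr_in (invariants act)) /\
  noetherian_in (invariants act).
Proof.
move=> [subR pidR [M [Mmax Muniq]] _] _ [act_aut _ _].
have noethR := pid_noetherian subR pidR.
have nonunitM x : x \isn't a GRing.unit -> M x.
  exact: nonunit_sub_unique_maximal noethR Muniq.
have subA := invariants_subring act_aut.
have pidA := invariants_pid act_aut pidR (divisibility_total pidR Mmax nonunitM).
split; last exact: pid_noetherian subA pidA.
have [fieldA|nfieldA] := classic (field_in (invariants act)); first by left.
by right; split=> //; apply: local_invariants Mmax nonunitM.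
Qed.
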